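(* Let $G$ be a $(3,4)$-biregular $X,Y$-bigraph in which every vertex of $X$ has degree 3 and every vertex of $Y$ has degree 4. If $G$ has a proper path-factor, then $G$ has an interval coloring using 6 colors (i.e., an interval coloring with colors from $\{1,\dots,6\}$).
   Context: Graphs may have multiple edges. An $X,Y$-bigraph is a bipartite graph with partite sets $X$ and $Y$. A $(3,4)$-biregular bigraph is a bipartite graph in which every vertex of one part has degree 3 and every vertex of the other part has degree 4. A proper path-factor of such a graph $G$ (with $X$ the degree-3 side) is a spanning subgraph of $G$ each of whose components is a path with both endpoints in $X$ and length (number of edges) in $\{2,4,6,8\}$. An interval coloring of a graph is a proper edge-coloring by positive integers such that at every vertex the set of colors on its incident edges is a set of consecutive integers; an interval 6-coloring uses the colors $1,\dots,6$. *)

From mathcomp Require Import all_boot.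
Set Implicit Arguments. Unset Strict Implicit. Unset Printing Implicit Defensive.

(* An X,Y-bigraph (multiple edges allowed) is given by partite vertex sets
   X, Y : finType, an edge type E : finType, and endpoint maps
   ex : E -> X, ey : E -> Y.  The vertex set of the graph is X + Y. *)

Section Bigraph.
Variables (X Y E : finType) (ex : E -> X) (ey : E -> Y).

Definition incident (e : E) (v : X + Y) : bool :=
  (v == inl (ex e)) || (v == inr (ey e)).

Definition degX (x : X) : nat := #|[set e : E | ex e == x]|.
Definition degY (y : Y) : nat := #|[set e : E | ey e == y]|.

Definition biregular34 : Prop :=
  (forall x : X, degX x = 3) /\ (forall y : Y, degY y = 4).

Definition joins (e : E) (u w : X + Y) : bool :=
  ((u == inl (ex e)) && (w == inr (ey e))) ||
  ((w == inl (ex e)) && (u == inr (ey e))).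

(* A path with vertex sequence vs = v_0 ... v_k and edge sequence
   es = e_1 ... e_k: pairwise distinct vertices, distinct edges, and
   e_(i+1) joins v_i and v_(i+1).  Its length is size es. *)
Definition is_path (vs : seq (X + Y)) (es : seq E) : bool :=
  [&& size vs == (size es).+1, uniq vs, uniq es &
      all (fun p : (X + Y) * (X + Y) * E => joins p.2 p.1.1 p.1.2)
          (zip (zip vs (behead vs)) es)].

Definition is_inl (v : X + Y) : bool := if v is inl _ then true else false.

(* A proper path-factor: a spanning subgraph with edge set F whose
   components are the paths listed in P (each given as (vertices, edges)):
   the paths are pairwise vertex-disjoint, cover every vertex, their
   edge sets make up F, each has both endpoints in X and length in
   {2,4,6,8}.  (Vertex-disjoint paths covering all vertices whose edges
   form F are exactly the components of the spanning subgraph (X+Y, F).) *)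
Definition ends_in_X (vs : seq (X + Y)) : bool :=
  if vs is v0 :: vs' then is_inl v0 && is_inl (last v0 vs') else false.

Definition proper_path_factor (F : {set E}) : Prop :=
  exists P : seq (seq (X + Y) * seq E),
    [/\ forall p, p \in P ->
          [/\ is_path p.1 p.2, ends_in_X p.1 & size p.2 \in [:: 2; 4; 6; 8]],
        pairwise (fun p q : seq (X + Y) * seq E => ~~ has (mem p.1) q.1) P,
        forall v : X + Y, has (fun p : seq (X + Y) * seq E => v \in p.1) P &
        forall e : E, (e \in F) = has (fun p : seq (X + Y) * seq E => e \in p.2) P].

Definition has_proper_path_factor : Prop :=
  exists F : {set E}, proper_path_factor F.

Definition interval_coloring (k : nat) (c : E -> nat) : Prop :=
  [/\ forall e, 1 <= c e <= k,
      forall e e' v, e != e' -> incident e v -> incident e' v -> c e != c e' &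
      forall v e1 e2 n, incident e1 v -> incident e2 v -> c e1 <= n <= c e2 ->
        exists e, incident e v /\ c e = n].
End Bigraph.

(* Let [F] be the edge set of the path-factor.  Off [F] every vertex has
   degree 2, except the inner [X]-vertices of the paths, which have degree 1.
   Adding an edge [v_2 v_6] for every path [v_0 ... v_8] of length 8 keeps the
   maximum degree at 2, so a balanced orientation of this multigraph has at
   most one edge leaving and one entering each vertex.  Color an edge off [F]
   by 3 if it is oriented from [X] to [Y] and by 4 otherwise; these colors are
   distinct at every vertex.  Each inner [X]-vertex thereby gets a type (3 or
   4), and the added edges force [v_2] and [v_6] to have different types.  The
   edges of a path are then colored from {1, 2, 5, 6} by a table depending
   only on its length and these types: {1, 2} around inner vertices of type 3,
   {5, 6} around those of type 4, 2 or 5 at the ends, and the two path edges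
   at a [Y]-vertex inside a window of four consecutive colors containing 3
   and 4. *)

From mathcomp Require Import all_boot zify.
Set Implicit Arguments. Unset Strict Implicit. Unset Printing Implicit Defensive.

Lemma count_perm_rem (T : eqType) (a : pred T) (x : T) (s : seq T) :
  x \in s -> count a s = a x + count a (rem x s).
Proof. by move=> xs; have /permP -> := perm_to_rem xs. Qed.

Lemma count_gt1 (T : eqType) (a : pred T) (s : seq T) x y :
  uniq s -> x \in s -> y \in s -> x != y -> a x -> a y -> 1 < count a s.
Proof.
move=> us xs ys nxy ax ay.
rewrite (count_perm_rem _ xs) ax (count_perm_rem a (_ : y \in rem x s)) ?ay //.
by rewrite mem_rem_uniq // inE ys andbT eq_sym.
Qed.

Lemma count_enum_set (T : finType) (A : {set T}) (a : pred T) :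
  count a (enum A) = #|[set x in A | a x]|.
Proof.
rewrite cardE -size_filter; apply/perm_size/uniq_perm.
- by rewrite filter_uniq // enum_uniq.
- by rewrite enum_uniq.
- by move=> x; rewrite mem_filter !mem_enum !inE andbC.
Qed.

Lemma consecutive_of_window (T : finType) (A : {set T}) (c : T -> nat) a :
  {in A &, injective c} -> (forall e, e \in A -> a <= c e < a + #|A|) ->
  forall e1 e2 n, e1 \in A -> e2 \in A -> c e1 <= n <= c e2 ->
  exists2 e, e \in A & c e = n.
Proof.
move=> cinj cwin e1 e2 n e1A e2A hn.
have uc : uniq (map c (enum A)).
  by rewrite map_inj_in_uniq ?enum_uniq // => x y; rewrite !mem_enum; apply: cinj.
have sub : {subset map c (enum A) <= iota a #|A|}.
  by move=> m /mapP [e]; rewrite mem_enum => /cwin ce ->; rewrite mem_iota.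
have hsize : size (iota a #|A|) <= size (map c (enum A)).
  by rewrite size_iota size_map -cardE.
have [_ eqs] := uniq_min_size uc sub hsize.
have : n \in iota a #|A|.
  by move: (cwin _ e1A) (cwin _ e2A); rewrite mem_iota; lia.
by rewrite -eqs => /mapP [e]; rewrite mem_enum => eA ->; exists e.
Qed.

Definition orient (V T : Type) (f : T -> V * V) (o : T -> bool) (k : T) : V * V :=
  if o k then f k else ((f k).2, (f k).1).

Section Degrees.
Variables (V T : eqType).
Implicit Types (f g : T -> V * V) (s : seq T) (w : V).

Definition outdeg g s w := count (fun k => (g k).1 == w) s.
Definition indeg g s w := count (fun k => (g k).2 == w) s.

Definition balanced g s :=
  forall w, outdeg g s w <= (indeg g s w).+1 /\ indeg g s w <= (outdeg g s w).+1.

Lemma eq_in_balanced g1 g2 s : {in s, g1 =1 g2} -> balanced g1 s -> balanced g2 s.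
Proof.
move=> eg b w.
have -> : outdeg g2 s w = outdeg g1 s w by apply: eq_in_count => k /eg /= ->.
have -> : indeg g2 s w = indeg g1 s w by apply: eq_in_count => k /eg /= ->.
exact: b.
Qed.

Lemma degree_orient f o s w :
  outdeg (orient f o) s w + indeg (orient f o) s w = outdeg f s w + indeg f s w.
Proof.
rewrite /outdeg /indeg; elim: s => //= k s.
by rewrite [orient f o k]/orient; case: (o k) => /=; lia.
Qed.

Lemma balanced_le1 g s w : balanced g s -> outdeg g s w + indeg g s w <= 2 ->
  outdeg g s w <= 1 /\ indeg g s w <= 1.
Proof. by move=> /(_ w); lia. Qed.

End Degrees.

Section SplittingOff.
Variables (V T : eqType).
Implicit Types (f g : T -> V * V) (s : seq T) (w : V).

Definition touches f w k := ((f k).1 == w) || ((f k).2 == w).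

Lemma degree_orient_untouched f o s w : ~~ has (touches f w) s ->
  outdeg (orient f o) s w = 0 /\ indeg (orient f o) s w = 0.
Proof.
rewrite has_count -leqNgt leqn0 => /eqP h0.
suff sub : forall a : pred T, subpred a (touches f w) -> count a s = 0.
  by split; apply: sub => k; rewrite /touches /orient; case: (o k) => /= ->; rewrite ?orbT.
by move=> a ha; apply/eqP; rewrite -leqn0 -h0 sub_count.
Qed.

Lemma balanced_cons_isolated f o k s :
  ~~ has (touches f (f k).1) s -> ~~ has (touches f (f k).2) s ->
  balanced (orient f o) s -> balanced (orient f o) (k :: s).
Proof.
move=> hu hv b w; rewrite /outdeg /indeg /=.
have ends : ((orient f o k).1 == w) || ((orient f o k).2 == w) -> (f k).1 == w \/ (f k).2 == w.
  by rewrite /orient; case: (o k) => /= /orP [] ->; auto.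
case: (boolP (((orient f o k).1 == w) || ((orient f o k).2 == w))) => [/ends hw|].
  have [h1 h2] : outdeg (orient f o) s w = 0 /\ indeg (orient f o) s w = 0.
    by case: hw => /eqP <-; apply: degree_orient_untouched.
  by move: h1 h2; rewrite /outdeg /indeg => -> ->; case: (_ == w); case: (_ == w).
by rewrite negb_or => /andP [/negbTE -> /negbTE ->]; apply: b.
Qed.

Lemma orient_swap f g o' : (forall k, g k = f k \/ g k = ((f k).2, (f k).1)) ->
  exists o, orient f o =1 orient g o'.
Proof.
move=> hg; exists (fun k => if g k == f k then o' k else ~~ o' k) => k; rewrite /orient.
case: (hg k) => ->; first by rewrite eqxx.
case: (f k) => a b /=; case: eqP => [[->]|_]; by case: (o' k).
Qed.

(* Splitting off the pair of edges [k1 = uv] and [k2 = vw'] replaces them by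
   the single edge [uw']; a balanced orientation of the result, read as
   [u -> v -> w'] or [w' -> v -> u], is still balanced at [v]. *)
Definition split_off f k1 k2 (ok : option T) : V * V :=
  if ok is Some k then f k
  else ((f k1).1, if (f k2).1 == (f k1).2 then (f k2).2 else (f k2).1).

Lemma balanced_split_off f k1 k2 s :
  uniq s -> k1 \notin s -> k2 \in s -> touches f (f k1).2 k2 ->
  (exists o', balanced (orient (split_off f k1 k2) o') (None :: map Some (rem k2 s))) ->
  exists o, balanced (orient f o) (k1 :: s).
Proof.
move=> us k1s k2s hk2 [o' bo'].
set v := (f k1).2; set g := split_off f k1 k2.
pose o k := if k == k1 then o' None
            else if k == k2 then o' None == ((f k2).1 == v) else o' (Some k).
exists o => w.
have k21 : k2 != k1 by apply: contraNneq k1s => <-.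
have rest : forall a : pred (V * V),
    count (a \o orient f o) (rem k2 s) = count (a \o orient g o') (map Some (rem k2 s)).
  move=> a; rewrite count_map; apply: eq_in_count => k.
  rewrite mem_rem_uniq // => /andP [kk2 ks] /=.
  have kk1 : k != k1 by apply: contraNneq k1s => <-.
  by rewrite /orient /o (negbTE kk1) (negbTE kk2).
have pair : forall a : pred V,
    [/\ a (orient f o k1).1 + a (orient f o k2).1 = a (orient g o' None).1 + a v
      & a (orient f o k1).2 + a (orient f o k2).2 = a (orient g o' None).2 + a v].
  move=> a; rewrite /orient /o eqxx (negbTE k21) eqxx /g /=.
  move: hk2; rewrite /touches /v; case: (f k1) (f k2) => u v' [x y] /=.
  case: eqP => [->|_] /= hy; last rewrite (eqP hy).
    by case: (o' None); split; rewrite //= addnC.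
  by case: (o' None); split; rewrite //= addnC.
have [out_k in_k] := pair (pred1 w).
have eo : outdeg (orient f o) (k1 :: s) w =
          outdeg (orient g o') (None :: map Some (rem k2 s)) w + (v == w).
  rewrite /outdeg /= (count_perm_rem _ k2s) addnA (rest (fun p => p.1 == w)).
  by move: out_k => /= ->; rewrite addnAC.
have ei : indeg (orient f o) (k1 :: s) w =
          indeg (orient g o') (None :: map Some (rem k2 s)) w + (v == w).
  rewrite /indeg /= (count_perm_rem _ k2s) addnA (rest (fun p => p.2 == w)).
  by move: in_k => /= ->; rewrite addnAC.
by rewrite eo ei -!addSn !leq_add2r; apply: bo'.
Qed.

End SplittingOff.

Theorem balanced_orientation (V T : eqType) (f : T -> V * V) (s : seq T) :
  uniq s -> exists o, balanced (orient f o) s.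
Proof.
move: {2}(size s) (leqnn (size s)) => n.
elim: n T f s => [|n IH] T f [|k s] //=; try by exists xpredT.
rewrite ltnS => hs /andP [ks us].
have split_case : forall g : T -> V * V,
    has (touches g (g k).2) s -> exists o, balanced (orient g o) (k :: s).
  move=> g /hasP [k2 k2s hk2]; apply: (balanced_split_off (k2 := k2)) => //; apply: IH.
    by rewrite /= size_map size_rem // prednK //; case: (s) k2s.
  rewrite /= map_inj_uniq ?rem_uniq // ?andbT; last by move=> ? ? [].
  by apply/mapP => -[].
case hv: (has (touches f (f k).2) s); first exact: split_case.
case hu: (has (touches f (f k).1) s).
  pose g k' := if k' == k then ((f k).2, (f k).1) else f k'.
  have [o' bo'] : exists o', balanced (orient g o') (k :: s).
    apply: split_case; rewrite -(eq_in_has (a1 := touches f (f k).1)) ?hu // => k' k's.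
    by rewrite /touches /g eqxx /=; case: (k' =P k) k's => [->|//]; rewrite (negbTE ks).
  have [o eo] : exists o, orient f o =1 orient g o'.
    by apply: orient_swap => k'; rewrite /g; case: (k' =P k) => [->|]; auto.
  by exists o; apply: eq_in_balanced bo' => k' _; rewrite eo.
have [o bo] := IH T f s hs us.
by exists o; apply: balanced_cons_isolated; rewrite ?hu ?hv.
Qed.

Section Paths.
Variables (X Y E : finType) (ex : E -> X) (ey : E -> Y).

Lemma joinsP (e : E) a b : joins ex ey e a b ->
  (a = inl (ex e) /\ b = inr (ey e)) \/ (b = inl (ex e) /\ a = inr (ey e)).
Proof. by rewrite /joins => /orP [] /andP [/eqP -> /eqP ->]; [left|right]. Qed.

Lemma joins_incident (e : E) a b :
  joins ex ey e a b -> incident ex ey e a /\ incident ex ey e b.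
Proof. by case/joinsP => -[-> ->]; rewrite /incident !eqxx ?orbT. Qed.

Lemma is_path_joins vs es j x0 e0 : is_path ex ey vs es -> j < size es ->
  joins ex ey (nth e0 es j) (nth x0 vs j) (nth x0 vs j.+1).
Proof.
case/and4P => /eqP hs _ _ /(all_nthP ((x0, x0), e0)) h hj.
have hz : j < size (zip (zip vs (behead vs)) es).
  by rewrite !size_zip size_behead hs; lia.
have hz2 : j < size (zip vs (behead vs)) by rewrite size_zip size_behead hs; lia.
by have := h j hz; rewrite nth_zip_cond hz /= nth_zip_cond hz2 /= nth_behead.
Qed.

Lemma is_path_parity vs es x0 : is_path ex ey vs es -> is_inl (nth x0 vs 0) ->
  forall i, i <= size es -> is_inl (nth x0 vs i) = ~~ odd i.
Proof.
move=> hp h0; elim=> [|i IH] hi //.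
have [e0 _] : exists e0 : E, true by case: (es) hi => // e0; exists e0.
have := is_path_joins x0 e0 hp hi; case/joinsP => -[e1 e2];
  move: (IH (ltnW hi)); rewrite e1 e2 /= => <- //.
Qed.

End Paths.

(* The colors of the edges of a path of length [n] of the factor, given the
   types [t2], [t4], [t6] of its inner [X]-vertices [v_2], [v_4], [v_6]: at an
   inner [X]-vertex of type [true] (resp. [false]) the edge off the path is
   colored [3] (resp. [4]) and the two path edges get [1, 2] (resp. [5, 6]);
   the edges at a [Y]-vertex, colored [3] and [4] off the path, fit in a
   window of four consecutive colors. *)
Definition path_colors (n : nat) (t2 t4 t6 : bool) : seq nat :=
  match n with
  | 2 => [:: 2; 5]
  | 4 => if t2 then [:: 2; 1; 2; 5] else [:: 5; 6; 5; 2]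
  | 6 => match t2, t4 with
         | true, true => [:: 2; 1; 2; 1; 2; 5]
         | true, false => [:: 2; 1; 2; 5; 6; 5]
         | false, true => [:: 5; 6; 5; 2; 1; 2]
         | false, false => [:: 5; 6; 5; 6; 5; 2]
         end
  | _ => match t2, t4 with
         | true, true => [:: 2; 1; 2; 1; 2; 5; 6; 5]
         | true, false => [:: 2; 1; 2; 5; 6; 5; 6; 5]
         | false, true => [:: 5; 6; 5; 2; 1; 2; 1; 2]
         | false, false => [:: 5; 6; 5; 6; 5; 2; 1; 2]
         end
  end.

Definition vertex_type (t2 t4 t6 : bool) (i : nat) : bool :=
  nth false [:: false; t2; t4; t6] i./2.

Definition fits_at (n : nat) (col : seq nat) (t : bool) (i : nat) : bool :=
  let c1 := nth 0 col i.-1 in let c2 := nth 0 col i in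
  if i == 0 then c2 \in [:: 2; 5]
  else if i == n then c1 \in [:: 2; 5]
  else (c1 != c2) &&
    if odd i then has (fun a => (a <= c1 < a + 4) && (a <= c2 < a + 4)) [:: 1; 2; 3]
    else if t then (c1 \in [:: 1; 2]) && (c2 \in [:: 1; 2])
    else (c1 \in [:: 5; 6]) && (c2 \in [:: 5; 6]).

Lemma fits_at_type n col t t' i : (i == 0) || (i == n) || odd i ->
  fits_at n col t i = fits_at n col t' i.
Proof. by rewrite /fits_at; case: (i == 0); case: (i == n); case: (odd i). Qed.

(* For [n = 8] and [t2 = t6 != t4] there is no such coloring: windows at
   [v_3] and [v_5] force both path edges at [v_4] to color [5] (or both to
   [2]).  This is why the auxiliary graph below joins [v_2] and [v_6]. *)
Lemma path_colors_spec n t2 t4 t6 : n \in [:: 2; 4; 6; 8] -> (n == 8 -> t2 != t6) ->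
  all (fun j => nth 0 (path_colors n t2 t4 t6) j \in [:: 1; 2; 5; 6]) (iota 0 n) &&
  all (fun i => fits_at n (path_colors n t2 t4 t6) (vertex_type t2 t4 t6 i) i) (iota 0 n.+1).
Proof.
rewrite !inE => /or4P [] /eqP ->; case: t2; case: t4; case: t6 => //= h;
  by move: (h isT).
Qed.

Lemma even_inner i n : 0 < i < n -> ~~ odd i -> n \in [:: 2; 4; 6; 8] -> i \in [:: 2; 4; 6].
Proof.
move=> /andP [h1 h2] h3; rewrite !inE => /or4P [] /eqP hn; subst n; move: h1 h2 h3;
  do 9? (case: i => [|i] //).
Qed.

Section PathFactor.
Variables (X Y E : finType) (ex : E -> X) (ey : E -> Y).
Hypotheses (degX3 : forall x, degX ex x = 3) (degY4 : forall y, degY ey y = 4).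
Variables (F : {set E}) (P : seq (seq (X + Y) * seq E)).
Hypothesis P_paths : forall p, p \in P ->
  [/\ is_path ex ey p.1 p.2, ends_in_X p.1 & size p.2 \in [:: 2; 4; 6; 8]].
Hypothesis P_disjoint :
  pairwise (fun p q : seq (X + Y) * seq E => ~~ has (mem p.1) q.1) P.
Hypothesis P_cover : forall v : X + Y, has (fun p : seq (X + Y) * seq E => v \in p.1) P.
Hypothesis F_paths : forall e : E, (e \in F) = has (fun p : seq (X + Y) * seq E => e \in p.2) P.
Variables (v0 : X + Y) (e0 : E).

Definition path0 : seq (X + Y) * seq E := ([::], [::]).

Definition path_of (v : X + Y) := nth path0 P (find (fun p => v \in p.1) P).

Definition edges_at (v : X + Y) := [set e | incident ex ey e v].
Definition F_at (v : X + Y) := [set e | (e \in F) && incident ex ey e v].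
Definition nonF_at (v : X + Y) := [set e | (e \notin F) && incident ex ey e v].

Lemma path_ofP v : path_of v \in P /\ v \in (path_of v).1.
Proof.
split; first by rewrite /path_of mem_nth // -has_find.
exact: (nth_find path0 (P_cover v)).
Qed.

Lemma size_path_vertices p : p \in P -> size p.1 = (size p.2).+1.
Proof. by case/P_paths => /and4P [/eqP -> _ _ _]. Qed.

Lemma path_vertices_uniq p : p \in P -> uniq p.1.
Proof. by case/P_paths => /and4P []. Qed.

Lemma path_ends_in_X p : p \in P -> is_inl (nth v0 p.1 0).
Proof. by case/P_paths => _; rewrite /ends_in_X; case: (p.1) => // a l /andP []. Qed.

Lemma nth_P_inj m m' : m < size P -> m' < size P -> nth path0 P m = nth path0 P m' -> m = m'.
Proof.
have nonempty q : q \in P -> exists v, v \in q.1.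
  by move/size_path_vertices; case: q.1 => // v ? _; exists v; exact: mem_head.
have neq a b : a < size P -> b < size P -> a < b -> nth path0 P a != nth path0 P b.
  move=> ha hb ab; apply/eqP => eab; have := (pairwiseP path0 P_disjoint) a b ha hb ab.
  have [w hw] := nonempty _ (mem_nth path0 ha).
  by rewrite -eab => /hasP; apply; exists w.
move=> hm hm' e; case: (ltngtP m m') => // h.
  by have := neq _ _ hm hm' h; rewrite e eqxx.
by have := neq _ _ hm' hm h; rewrite e eqxx.
Qed.

Lemma path_of_eq p v : p \in P -> v \in p.1 -> path_of v = p.
Proof.
move=> pP vp; have [qP vq] := path_ofP v.
move: pP qP vp vq => /(nthP path0) [a ha <-] /(nthP path0) [b hb <-] va vb.
case: (ltngtP a b) => h; last by rewrite h.
- by have := (pairwiseP path0 P_disjoint) _ _ ha hb h => /hasP []; exists v.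
- by have := (pairwiseP path0 P_disjoint) _ _ hb ha h => /hasP []; exists v.
Qed.

Lemma path_edge_in_F p j : p \in P -> j < size p.2 -> nth e0 p.2 j \in F.
Proof. by move=> pP hj; rewrite F_paths; apply/hasP; exists p => //; rewrite mem_nth. Qed.

Lemma path_edge_incident p j : p \in P -> j < size p.2 ->
  incident ex ey (nth e0 p.2 j) (nth v0 p.1 j) /\
  incident ex ey (nth e0 p.2 j) (nth v0 p.1 j.+1).
Proof. by move=> /P_paths [hp _ _] hj; apply: joins_incident; apply: is_path_joins. Qed.

Lemma path_vertex_at p j : p \in P -> j <= size p.2 ->
  path_of (nth v0 p.1 j) = p /\ index (nth v0 p.1 j) p.1 = j.
Proof.
move=> pP hj; have hs := size_path_vertices pP.
have jm : nth v0 p.1 j \in p.1 by rewrite mem_nth // hs.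
by rewrite (path_of_eq pP jm) index_uniq ?hs // path_vertices_uniq.
Qed.

Lemma is_inl_path_vertex p j : p \in P -> j <= size p.2 -> is_inl (nth v0 p.1 j) = ~~ odd j.
Proof.
by move=> pP; have [hp _ _] := P_paths pP; apply: (is_path_parity hp); apply: path_ends_in_X.
Qed.

Lemma path_edge_position e v p : e \in p.2 -> p \in P -> incident ex ey e v ->
  v \in p.1 /\ (index e p.2 = index v p.1 \/ (index e p.2).+1 = index v p.1).
Proof.
move=> ep pP hinc; have [hp _ _] := P_paths pP.
have hs := size_path_vertices pP; have uv := path_vertices_uniq pP.
set j := index e p.2; have hj : j < size p.2 by rewrite index_mem.
have := is_path_joins v0 e0 hp hj; rewrite nth_index //.
have hv k : k <= size p.2 -> v = nth v0 p.1 k -> v \in p.1 /\ index v p.1 = k.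
  by move=> hk ->; rewrite mem_nth ?index_uniq // hs.
move: hinc; rewrite /incident => /orP [] /eqP ev /joinsP [] [e1 e2].
- by have [? ->] := hv j (ltnW hj) (etrans ev (esym e1)); split => //; left.
- by have [? <-] := hv j.+1 hj (etrans ev (esym e1)); split => //; right.
- by have [? <-] := hv j.+1 hj (etrans ev (esym e2)); split => //; right.
- by have [? ->] := hv j (ltnW hj) (etrans ev (esym e2)); split => //; left.
Qed.

Lemma F_edge_position v e : e \in F -> incident ex ey e v ->
  e \in (path_of v).2 /\ (index e (path_of v).2 = index v (path_of v).1 \/
                          (index e (path_of v).2).+1 = index v (path_of v).1).
Proof.
rewrite F_paths => /hasP [q qP eq] hinc.
have [vq _] := path_edge_position eq qP hinc.
by rewrite (path_of_eq qP vq); split => //; have [] := path_edge_position eq qP hinc.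
Qed.

Lemma path_of_edge v e : e \in F -> incident ex ey e v -> path_of v = path_of (inl (ex e)).
Proof.
move=> eF hinc; have [ep _] := F_edge_position eF hinc.
have [pP _] := path_ofP v.
have hx : incident ex ey e (inl (ex e)) by rewrite /incident eqxx.
by have [xp _] := path_edge_position ep pP hx; rewrite (path_of_eq pP xp).
Qed.

Lemma vertex_position v :
  [/\ path_of v \in P, index v (path_of v).1 <= size (path_of v).2,
      is_inl v = ~~ odd (index v (path_of v).1)
    & size (path_of v).2 \in [:: 2; 4; 6; 8]].
Proof.
have [pP vp] := path_ofP v; have [_ _ hn] := P_paths pP.
have hi : index v (path_of v).1 <= size (path_of v).2.
  by rewrite -ltnS -(size_path_vertices pP) index_mem.
split => //; have := is_inl_path_vertex pP hi; by rewrite nth_index.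
Qed.

Lemma card_edges_at v : #|edges_at v| = if is_inl v then 3 else 4.
Proof.
case: v => [x|y] /=.
- rewrite -(degX3 x) /degX; apply: eq_card => e; rewrite !inE /incident.
  by rewrite orbF; apply/eqP/eqP => [[]|->].
- rewrite -(degY4 y) /degY; apply: eq_card => e; rewrite !inE /incident.
  by apply/eqP/eqP => [[]|->].
Qed.

Lemma F_at_eq v : let p := path_of v in let i := index v p.1 in
  F_at v = [set e | ((0 < i) && (e == nth e0 p.2 i.-1)) ||
                    ((i < size p.2) && (e == nth e0 p.2 i))].
Proof.
move=> p i; have [pP hi _ _] := vertex_position v; rewrite -/p -/i in pP hi.
have hv : nth v0 p.1 i = v by rewrite nth_index //; have [] := path_ofP v.
apply/setP => e; rewrite !inE; apply/idP/idP.
- case/andP => eF hinc; have [ep [] hj] := F_edge_position eF hinc; rewrite -/p -/i in ep hj.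
  + by apply/orP; right; rewrite -hj index_mem ep nth_index ?eqxx.
  + by apply/orP; left; rewrite -hj /= nth_index ?eqxx.
- case/orP => /andP [hi' /eqP ->].
  + have hj : i.-1 < size p.2 by rewrite (leq_trans _ hi) // prednK.
    rewrite path_edge_in_F //=; have [_] := path_edge_incident pP hj.
    by rewrite prednK // hv.
  + by rewrite path_edge_in_F //=; have [] := path_edge_incident pP hi'; rewrite hv.
Qed.

Lemma card_F_at v : let p := path_of v in let i := index v p.1 in
  #|F_at v| = (0 < i) + (i < size p.2).
Proof.
move=> p i; have [pP hi _ hn] := vertex_position v; rewrite -/p -/i in pP hi hn.
have [hp _ _] := P_paths pP; have [_ _ ue _] := and4P hp.
have hn2 : 0 < size p.2 by move: hn; rewrite !inE; case/or4P => /eqP ->.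
rewrite F_at_eq -/p -/i; case: (posnP i) => [->|ip] /=.
  by rewrite hn2 (_ : [set e | _] = [set nth e0 p.2 0]) ?cards1 //; apply/setP => e; rewrite !inE.
case: (ltnP i (size p.2)) => hin /=.
  rewrite (_ : [set e | _] = [set nth e0 p.2 i.-1; nth e0 p.2 i]); last by apply/setP => e; rewrite !inE.
  rewrite cards2 nth_uniq //; last by rewrite (leq_ltn_trans (leq_pred _) hin).
  by rewrite neq_ltn ltn_predL ip.
by rewrite (_ : [set e | _] = [set nth e0 p.2 i.-1]) ?cards1 //; apply/setP => e; rewrite !inE orbF.
Qed.

Lemma card_nonF_at v : let p := path_of v in let i := index v p.1 in
  #|nonF_at v| + (0 < i) + (i < size p.2) = if is_inl v then 3 else 4.
Proof.
move=> p i; rewrite -addnA -card_F_at -card_edges_at addnC -(cardsID F (edges_at v)).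
by congr (_ + _); apply: eq_card => e; rewrite !inE andbC.
Qed.

(* The auxiliary multigraph: the edges outside the factor, together with an
   edge [v_2 v_6] for every path of length 8 (indexed by its position in
   [P]). *)
Definition aux_ends (k : E + nat) : (X + Y) * (X + Y) :=
  match k with
  | inl e => (inl (ex e), inr (ey e))
  | inr m => (nth v0 (nth path0 P m).1 2, nth v0 (nth path0 P m).1 6)
  end.

Definition long_paths := [seq m <- iota 0 (size P) | size (nth path0 P m).2 == 8].

Definition aux_edges : seq (E + nat) := map inl (enum (~: F)) ++ map inr long_paths.

Lemma long_paths_uniq : uniq long_paths.
Proof. by rewrite filter_uniq // iota_uniq. Qed.

Lemma aux_edges_uniq : uniq aux_edges.
Proof.
rewrite cat_uniq; apply/and3P; split.
- by rewrite map_inj_uniq ?enum_uniq // => ? ? [].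
- by apply/negP => /hasP [k /mapP [m _ ->] /mapP [e]].
- by rewrite map_inj_uniq ?long_paths_uniq // => ? ? [].
Qed.

Lemma aux_edges_nonF e : e \notin F -> inl e \in aux_edges.
Proof. by move=> eF; rewrite mem_cat map_f // mem_enum inE. Qed.

Lemma aux_edges_long p : p \in P -> size p.2 = 8 -> inr (index p P) \in aux_edges.
Proof.
move=> pP h8; rewrite mem_cat; apply/orP; right.
by rewrite map_f // mem_filter nth_index // h8 eqxx mem_iota add0n index_mem.
Qed.

Lemma long_path_vertex_count w j : j <= 8 ->
  count (fun m => nth v0 (nth path0 P m).1 j == w) long_paths <=
  (index w (path_of w).1 == j) && (size (path_of w).2 == 8).
Proof.
move=> hj; set a := fun m => _.
have key m : m \in long_paths -> a m ->
    [/\ index w (path_of w).1 = j, size (path_of w).2 = 8 & m = index (path_of w) P].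
  rewrite mem_filter mem_iota add0n => /andP [/eqP h8 hm] /eqP hw.
  have qP : nth path0 P m \in P by rewrite mem_nth.
  have hj' : j <= size (nth path0 P m).2 by rewrite h8.
  rewrite -hw; have [-> ->] := path_vertex_at qP hj'; split => //.
  by apply: nth_P_inj; rewrite ?index_mem ?nth_index.
case: (boolP (has a long_paths)) => [/hasP [m mL am]|hn]; last first.
  by move: hn; rewrite has_count -leqNgt leqn0 => /eqP ->.
have [-> -> _] := key m mL am; rewrite !eqxx /=.
rewrite (eq_in_count (a2 := fun m => a m && (m == index (path_of w) P))); last first.
  move=> m' mL'; case: (boolP (a m')) => //= am'.
  by have [_ _ ->] := key m' mL' am'; rewrite eqxx.
apply: leq_trans (_ : count (pred1 (index (path_of w) P)) long_paths <= 1).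
  by apply: sub_count => m' /andP [].
by rewrite count_uniq_mem ?long_paths_uniq // leq_b1.
Qed.

Lemma aux_degree w :
  outdeg aux_ends aux_edges w + indeg aux_ends aux_edges w =
  #|nonF_at w| + count (fun m => nth v0 (nth path0 P m).1 2 == w) long_paths
               + count (fun m => nth v0 (nth path0 P m).1 6 == w) long_paths.
Proof.
rewrite /outdeg /indeg /aux_edges !count_cat !count_map !count_enum_set addnACA.
have -> : #|[set e in ~: F | preim inl (fun k => (aux_ends k).1 == w) e]| +
          #|[set e in ~: F | preim inl (fun k => (aux_ends k).2 == w) e]| = #|nonF_at w|.
  case: w => [x|y].
  - rewrite [K in _ + K]eq_card0 ?addn0; last by move=> e; rewrite !inE /= andbF.
    by apply: eq_card => e; rewrite /nonF_at !inE /incident /= orbF eq_sym.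
  - rewrite eq_card0 ?add0n; last by move=> e; rewrite !inE /= andbF.
    by apply: eq_card => e; rewrite /nonF_at !inE /incident /= eq_sym.
by rewrite addnA.
Qed.

Lemma aux_degree_le2 w : outdeg aux_ends aux_edges w + indeg aux_ends aux_edges w <= 2.
Proof.
have [_ hi hpar hn] := vertex_position w.
have hd := card_nonF_at w; rewrite /= hpar in hd.
have h2 := long_path_vertex_count w (isT : 2 <= 8).
have h6 := long_path_vertex_count w (isT : 6 <= 8).
rewrite aux_degree; move: hn hi hd h2 h6.
set c2 := count _ long_paths; set c6 := count _ long_paths.
move: (index _ _) (size _) #|_| c2 c6 => i n d {}c2 {}c6.
rewrite !inE => /or4P [] /eqP -> hi; do 9? (case: i hi => [|i] hi //=); lia.
Qed.

Variable o : E + nat -> bool.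
Hypothesis o_balanced : balanced (orient aux_ends o) aux_edges.

Lemma aux_out_in_le1 w :
  outdeg (orient aux_ends o) aux_edges w <= 1 /\ indeg (orient aux_ends o) aux_edges w <= 1.
Proof. by apply: balanced_le1 => //; rewrite degree_orient aux_degree_le2. Qed.

Lemma aux_out_in_unique w k k' : k \in aux_edges -> k' \in aux_edges -> k != k' ->
  ((orient aux_ends o k).1 == w) && ((orient aux_ends o k').1 == w) ||
  ((orient aux_ends o k).2 == w) && ((orient aux_ends o k').2 == w) -> False.
Proof.
move=> ks k's nkk' /orP [] /andP [h1 h2]; have [c1 c2] := aux_out_in_le1 w.
- have := count_gt1 (a := fun k => (orient aux_ends o k).1 == w) aux_edges_uniq ks k's nkk' h1 h2.
  by rewrite ltnNge c1.
- have := count_gt1 (a := fun k => (orient aux_ends o k).2 == w) aux_edges_uniq ks k's nkk' h1 h2.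
  by rewrite ltnNge c2.
Qed.

Lemma orient_nonF e v : incident ex ey e v ->
  ((orient aux_ends o (inl e)).1 == v) = (o (inl e) == is_inl v) /\
  ((orient aux_ends o (inl e)).2 == v) = (o (inl e) != is_inl v).
Proof.
by rewrite /incident /orient => /orP [] /eqP ->; case: (o (inl e)); rewrite /= ?eqxx.
Qed.

Lemma nonF_orient_inj v e e' : e \in nonF_at v -> e' \in nonF_at v -> e != e' ->
  o (inl e) != o (inl e').
Proof.
rewrite !inE => /andP [eF he] /andP [e'F he'] ne; apply/negP => /eqP eo.
have [a1 a2] := orient_nonF he; have [b1 b2] := orient_nonF he'.
apply: (@aux_out_in_unique v (inl e) (inl e')); rewrite ?aux_edges_nonF //.
by rewrite a1 a2 b1 b2 eo; case: (o (inl e') == is_inl v).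
Qed.

(* [true] iff some edge off the factor leaves the [X]-vertex, i.e. is colored 3. *)
Definition xtype (v : X + Y) : bool :=
  if v is inl x then [exists e, (e \notin F) && (ex e == x) && o (inl e)] else false.

Definition is_inner (v : X + Y) := 0 < index v (path_of v).1 < size (path_of v).2.

Lemma card_nonF_inner v : is_inl v -> is_inner v -> #|nonF_at v| = 1.
Proof. by move=> hv /andP [h1 h2]; have /= := card_nonF_at v; rewrite hv h1 h2; lia. Qed.

Lemma xtype_inner v e : is_inl v -> is_inner v -> e \in nonF_at v -> xtype v = o (inl e).
Proof.
move=> hv hi he; have /eqP h1 := card_nonF_inner hv hi.
case: v hv hi he h1 => // x _ hi he h1 /=.
apply/existsP/idP => [[e' /andP [/andP [e'F /eqP ex']] oe']|oe].
  have e'n : e' \in nonF_at (inl x) by rewrite !inE e'F /incident ex' eqxx.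
  by have /cards1P [z hz] := h1; move: he e'n oe'; rewrite hz !inE => /eqP -> /eqP ->.
exists e; move: he; rewrite !inE /incident orbF => /andP [-> /eqP [->]].
by rewrite eqxx oe.
Qed.

Lemma xtype_long_path p : p \in P -> size p.2 = 8 ->
  xtype (nth v0 p.1 2) != xtype (nth v0 p.1 6).
Proof.
move=> pP h8; set x2 := nth v0 p.1 2; set x6 := nth v0 p.1 6.
have inner_at j : j \in [:: 2; 6] -> is_inl (nth v0 p.1 j) /\ is_inner (nth v0 p.1 j).
  move=> hj; have hj8 : j <= size p.2 by rewrite h8; move: hj; rewrite !inE => /orP [] /eqP ->.
  rewrite /is_inner; have [-> ->] := path_vertex_at pP hj8; rewrite is_inl_path_vertex // h8.
  by move: hj; rewrite !inE => /orP [] /eqP ->.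
have nonF_edge j : j \in [:: 2; 6] -> exists2 e, e \in nonF_at (nth v0 p.1 j) &
    xtype (nth v0 p.1 j) = o (inl e).
  move=> /inner_at [hl hi]; have /eqP/cards1P [e he] := card_nonF_inner hl hi.
  by exists e; rewrite ?he ?inE //; apply: xtype_inner; rewrite // he inE.
have [e2 he2 ->] := nonF_edge 2 isT; have [e6 he6 ->] := nonF_edge 6 isT.
have [l2 _] := inner_at 2 isT; have [l6 _] := inner_at 6 isT.
move: he2 he6; rewrite !inE => /andP [e2F hi2] /andP [e6F hi6].
have [a1 a2] := orient_nonF hi2; have [b1 b2] := orient_nonF hi6.
rewrite -/x2 -/x6 in l2 l6 a1 a2 b1 b2; rewrite l2 in a1 a2; rewrite l6 in b1 b2.
set k := inr (index p P) : E + nat.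
have ks : k \in aux_edges by apply: aux_edges_long.
have ek : orient aux_ends o k = if o k then (x2, x6) else (x6, x2).
  by rewrite /orient /= nth_index //; case: (o k).
(* if [k] leaves [x2] (and enters [x6]), the edge at [x2] must enter it and
   the edge at [x6] must leave it, and symmetrically *)
case: (o k) ek => ek.
- have o2 : o (inl e2) = false.
    apply/negP => oe; apply: (@aux_out_in_unique x2 k (inl e2)); rewrite ?aux_edges_nonF //.
    by rewrite ek a1 oe /= eqxx.
  have o6 : o (inl e6) = true.
    apply/negPn/negP => oe; apply: (@aux_out_in_unique x6 k (inl e6)); rewrite ?aux_edges_nonF //.
    by rewrite ek b2 (negbTE oe) /= eqxx orbT.
  by rewrite o2 o6.
- have o6 : o (inl e6) = false.
    apply/negP => oe; apply: (@aux_out_in_unique x6 k (inl e6)); rewrite ?aux_edges_nonF //.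
    by rewrite ek b1 oe /= eqxx.
  have o2 : o (inl e2) = true.
    apply/negPn/negP => oe; apply: (@aux_out_in_unique x2 k (inl e2)); rewrite ?aux_edges_nonF //.
    by rewrite ek a2 (negbTE oe) /= eqxx orbT.
  by rewrite o2 o6.
Qed.

Definition path_coloring (p : seq (X + Y) * seq E) : seq nat :=
  path_colors (size p.2) (xtype (nth v0 p.1 2)) (xtype (nth v0 p.1 4)) (xtype (nth v0 p.1 6)).

Definition coloring (e : E) : nat :=
  if e \in F then let p := path_of (inl (ex e)) in nth 0 (path_coloring p) (index e p.2)
  else if o (inl e) then 3 else 4.

Lemma path_coloring_spec p : p \in P ->
  all (fun j => nth 0 (path_coloring p) j \in [:: 1; 2; 5; 6]) (iota 0 (size p.2)) &&
  all (fun i => fits_at (size p.2) (path_coloring p) (xtype (nth v0 p.1 i)) i)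
      (iota 0 (size p.2).+1).
Proof.
move=> pP; have [_ _ hn] := P_paths pP.
have /andP [-> /allP hfit] := path_colors_spec (xtype (nth v0 p.1 4)) hn
  (fun h8 => xtype_long_path pP (eqP h8)).
apply/allP => i hi; have := hfit i hi; rewrite mem_iota ltnS /= in hi.
case: (boolP ((i == 0) || (i == size p.2) || odd i)) => hend.
  by rewrite (fits_at_type _ _ (xtype (nth v0 p.1 i)) hend).
have inner_i : 0 < i < size p.2.
  by move: hend; rewrite lt0n ltn_neqAle hi; case: (i == 0); case: (i == _).
have : i \in [:: 2; 4; 6] by apply: even_inner inner_i _ hn; move: hend; rewrite !negb_or => /andP [].
by rewrite !inE => /or3P [] /eqP ->.
Qed.

Lemma coloring_at v e : e \in edges_at v ->
  let p := path_of v in let i := index v p.1 in let col := path_coloring p in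
  [\/ [/\ e \in F, 0 < i, e = nth e0 p.2 i.-1 & coloring e = nth 0 col i.-1],
      [/\ e \in F, i < size p.2, e = nth e0 p.2 i & coloring e = nth 0 col i]
    | e \in nonF_at v /\ coloring e = if o (inl e) then 3 else 4].
Proof.
rewrite inE => hinc p i col; case: (boolP (e \in F)) => eF; last first.
  by apply: Or33; rewrite /coloring (negbTE eF) !inE eF hinc.
have [ep [] hj] := F_edge_position eF hinc; rewrite -/p -/i in ep hj.
- by apply: Or32; rewrite -hj index_mem /coloring eF -(path_of_edge eF hinc) nth_index.
- by apply: Or31; rewrite -hj /= /coloring eF -(path_of_edge eF hinc) nth_index.
Qed.

Lemma coloring_nonF e : e \notin F -> coloring e \in [:: 3; 4].
Proof. by move=> eF; rewrite /coloring (negbTE eF); case: (o (inl e)). Qed.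

Lemma coloring_F_palette e : e \in F -> coloring e \in [:: 1; 2; 5; 6].
Proof.
move=> eF; have hx : e \in edges_at (inl (ex e)) by rewrite inE /incident eqxx.
have [pP hi _ _] := vertex_position (inl (ex e)).
have /andP [/allP hpal _] := path_coloring_spec pP.
case: (coloring_at hx) => [[_ h1 _ ->]|[_ h1 _ ->]|[]]; last by rewrite inE eF.
  by apply: hpal; rewrite mem_iota /= prednK // (leq_trans _ hi).
by apply: hpal; rewrite mem_iota.
Qed.

Lemma fits_at_vertex v : let p := path_of v in
  fits_at (size p.2) (path_coloring p) (xtype v) (index v p.1).
Proof.
have [pP hi _ _] := vertex_position v; have [_ vp] := path_ofP v.
have /andP [_ /allP hfit] := path_coloring_spec pP.
by have := hfit (index v (path_of v).1); rewrite nth_index // mem_iota ltnS => /(_ hi).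
Qed.

Lemma coloring_inj_at v : {in edges_at v &, injective coloring}.
Proof.
have := fits_at_vertex v; rewrite /fits_at => hfit.
have sep : 0 < index v (path_of v).1 -> index v (path_of v).1 < size (path_of v).2 ->
    nth 0 (path_coloring (path_of v)) (index v (path_of v).1).-1 !=
    nth 0 (path_coloring (path_of v)) (index v (path_of v).1).
  by move=> h1 h2; move: hfit; rewrite (gtn_eqF h1) (ltn_eqF h2) => /andP [].
move=> e e' he he' ce.
case: (coloring_at he) (coloring_at he') => [[eF h1 ee c]|[eF h1 ee c]|[hn c]]
  [[e'F h1' ee' c']|[e'F h1' ee' c']|[hn' c']].
- by rewrite ee ee'.
- by move: (sep h1 h1'); rewrite -c -c' ce eqxx.
- by move: (coloring_F_palette eF); rewrite ce c'; case: (o (inl e')).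
- by move: (sep h1' h1); rewrite -c -c' ce eqxx.
- by rewrite ee ee'.
- by move: (coloring_F_palette eF); rewrite ce c'; case: (o (inl e')).
- by move: (coloring_F_palette e'F); rewrite -ce c; case: (o (inl e)).
- by move: (coloring_F_palette e'F); rewrite -ce c; case: (o (inl e)).
- case: (e =P e') => // /eqP ne; move: ce (nonF_orient_inj hn hn' ne).
  by rewrite c c'; case: (o (inl e)); case: (o (inl e')).
Qed.

Lemma window_at_end v c : c \in [:: 2; 5] ->
  (forall e, e \in edges_at v -> e \in F -> coloring e = c) ->
  exists a, forall e, e \in edges_at v -> a <= coloring e < a + 3.
Proof.
move=> hc hF; exists (if c == 2 then 2 else 3) => e he.
case: (boolP (e \in F)) => [/(hF e he) ->|/coloring_nonF].
  by move: hc; rewrite !inE => /orP [] /eqP ->.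
by rewrite !inE => /orP [] /eqP ->; case: (c == 2).
Qed.

Lemma coloring_window_at v :
  exists a, forall e, e \in edges_at v -> a <= coloring e < a + #|edges_at v|.
Proof.
have := fits_at_vertex v; rewrite /fits_at card_edges_at.
have [_ hi hpar hn] := vertex_position v; rewrite hpar.
have at_v e (he : e \in edges_at v) := coloring_at he; simpl in at_v; move: hi at_v.
set p := path_of v; set i := index v p.1; set col := path_coloring p.
set c1 := nth 0 col i.-1; set c2 := nth 0 col i => hi at_v.
have nonF_color e : e \in nonF_at v -> coloring e \in [:: 3; 4].
  by rewrite inE => /andP [/coloring_nonF].
case: (posnP i) => [i0|ip].
  rewrite i0 /= => hc2; apply: (window_at_end hc2) => e he eF.
  case: (at_v e he) => [[_ h1 _ _]|[_ _ _ ->]|[]] //; first by rewrite i0 in h1.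
  by rewrite inE eF.
case: (ltnP i (size p.2)) => hin; last first.
  have iN : i = size p.2 by apply/eqP; rewrite eqn_leq hi hin.
  have ev : odd i = false by rewrite iN; move: hn; rewrite !inE => /or4P [] /eqP ->.
  rewrite iN eqxx -iN ev /= => hc1; apply: (window_at_end hc1) => e he eF.
  case: (at_v e he) => [[_ _ _ ->]|[_ h1 _ _]|[]] //; first by rewrite iN ltnn in h1.
  by rewrite inE eF.
rewrite (ltn_eqF hin) => /andP [_]; case hodd : (odd i).
  case/hasP => a ain /and3P [win1 lo2 hi2]; exists a => e he /=.
  case: (at_v e he) => [[_ _ _ ->]|[_ _ _ ->]|[/nonF_color]] //; first by rewrite lo2 hi2.
  by rewrite !inE => /orP [] /eqP ->; move: ain; rewrite !inE => /or3P [] /eqP ->.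
have hl : is_inl v by rewrite hpar hodd.
have hinner : is_inner v by rewrite /is_inner -/p -/i ip hin.
move=> hc; exists (if xtype v then 1 else 4) => e he /=.
case: (at_v e he) => [[_ _ _ ->]|[_ _ _ ->]|[hnF ->]].
- by case: (xtype v) hc => /andP [+ _]; rewrite !inE => /orP [] /eqP ->.
- by case: (xtype v) hc => /andP [_]; rewrite !inE => /orP [] /eqP ->.
- by rewrite -(xtype_inner hl hinner hnF); case: (xtype v).
Qed.

Theorem coloring_interval : interval_coloring ex ey 6 coloring.
Proof.
split.
- move=> e; case: (boolP (e \in F)) => [/coloring_F_palette|/coloring_nonF].
    by rewrite !inE => /or4P [] /eqP ->.
  by rewrite !inE => /orP [] /eqP ->.
- move=> e e' v ne ie ie'; apply: contra ne => /eqP ce.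
  by apply/eqP; apply: (coloring_inj_at (v := v)); rewrite ?inE.
- move=> v e1 e2 n ie1 ie2 hn; have [a ha] := coloring_window_at v.
  have ie1' : e1 \in edges_at v by rewrite inE.
  have ie2' : e2 \in edges_at v by rewrite inE.
  have [e he ce] := consecutive_of_window (coloring_inj_at (v := v)) ha ie1' ie2' hn.
  by exists e; rewrite inE in he.
Qed.

End PathFactor.

Theorem mainTheorem2 (X Y E : finType) (ex : E -> X) (ey : E -> Y) :
  biregular34 ex ey ->
  has_proper_path_factor ex ey ->
  exists c : E -> nat, interval_coloring ex ey 6 c.
Proof.
move=> [degX3 degY4] [F [P [P_paths P_disjoint P_cover F_paths]]].
case: (pickP (fun _ : E => true)) => [e0 _|noE]; last first.
  by exists (fun _ => 1); split=> [e|e|v e]; have := noE e.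
have [o o_bal] := balanced_orientation (aux_ends ex ey P (inl (ex e0)))
                    (aux_edges_uniq F P).
by eexists; apply: (coloring_interval degX3 degY4 P_paths P_disjoint P_cover F_paths e0 o_bal).
Qed.
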